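(* Assume the setting of the model $Y_i = Z_i^T \pi^* + D_i \beta^* + \epsilon_i$, $E(\epsilon_i \mid Z_i)=0$, with $B^* = \{j : \pi^*_j \ne 0\}$, an integer $U$ with $1 \le U \le L-1$ (so that every $B$ with $c(B)=U-1$ has $c(B^C) \ge 2$), and $c(B^* ) < U$. Let $\alpha_1, \alpha_2 \in (0,1)$ with $\alpha = \alpha_1 + \alpha_2 < 1$. For every $\beta_0$ and $B \subseteq \{1,\ldots,L\}$ let $T(\beta_0,B)$ be a test statistic with critical value $q^T_{1-\alpha_2}(B)$ such that whenever $B^* \subseteq B$ and $\beta^*=\beta_0$, $\mathrm{pr}\{T(\beta_0,B) > q^T_{1-\alpha_2}(B)\} \le \alpha_2$, and let $C_{1-\alpha_2}(Y,D,Z,B) = \{\beta_0 : T(\beta_0,B) \le q^T_{1-\alpha_2}(B)\}$. For every $B$ with $c(B^C) \ge 2$ let $S(B)$ be a pretest statistic for the null hypothesis $\pi^*_{B^C} = 0$ with critical value $q^S_{1-\alpha_1}(B)$ such that whenever $\pi^*_{B^C} = 0$ (equivalently $B^* \subseteq B$), $\mathrm{pr}\{S(B) > q^S_{1-\alpha_1}(B)\} \le \alpha_1$. Define \[ C'_{1-\alpha}(Y,D,Z) = \bigcup \big\{ C_{1-\alpha_2}(Y,D,Z,B) : B \subseteq \{1,\ldots,L\},\ c(B) = U-1,\ S(B) \le q^S_{1-\alpha_1}(B) \big\}. \] Then $\mathrm{pr}\{\beta^* \in C'_{1-\alpha}(Y,D,Z)\} \ge 1-\alpha$.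
   Context: $Y=(Y_1,\ldots,Y_n)$, $D=(D_1,\ldots,D_n)$, $Z$ is the $n\times L$ matrix with rows $Z_i^T$, and $\pi^*\in\mathbb{R}^L$, $\beta^*\in\mathbb{R}$ are unknown. For $A \subseteq \{1,\ldots,L\}$, $c(A)$ is its cardinality, $A^C$ its complement, and for a vector $\pi \in \mathbb{R}^L$, $\pi_A$ is the subvector of entries indexed by $A$. *)

From Stdlib Require Import Reals.
From mathcomp Require Import all_boot.
Open Scope R_scope.
Set Implicit Arguments.
Unset Strict Implicit.
Unset Printing Implicit Defensive.

(* A probability space on an abstract sample space Omega:
   a sigma-algebra of measurable events and a countably additive
   probability measure pr (pr is total; only its values on measurable
   events are meaningful). *)
Record prob_space (Omega : Type) := ProbSpace {
  measurable : (Omega -> Prop) -> Prop;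
  pr : (Omega -> Prop) -> R;
  meas_full : measurable (fun _ => True);
  meas_compl : forall A, measurable A -> measurable (fun w => ~ A w);
  meas_cunion : forall A : nat -> Omega -> Prop,
      (forall k, measurable (A k)) -> measurable (fun w => exists k, A k w);
  pr_nonneg : forall A, measurable A -> (0 <= pr A);
  pr_full : pr (fun _ => True) = 1;
  pr_sigma_add : forall A : nat -> Omega -> Prop,
      (forall k, measurable (A k)) ->
      (forall i j w, i <> j -> A i w -> A j w -> False) ->
      infinite_sum (fun k => pr (A k)) (pr (fun w => exists k, A k w))
}.

Definition nzb (x : R) : bool := if Req_EM_T x 0 then false else true.

Definition supp (L : nat) (pi : 'I_L -> R) : {set 'I_L} := [set j | nzb (pi j)].

(* Type of a statistic computed from the data (Y, D, Z),
   with Y, D in R^n and Z an n x L matrix (Z i j = j-th entry of Z_i). *)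
Definition data_stat (n L : nat) :=
  ('I_n -> R) -> ('I_n -> R) -> ('I_n -> 'I_L -> R) -> R.

Definition C_set (n L : nat) (T : R -> {set 'I_L} -> data_stat n L)
  (qT : {set 'I_L} -> data_stat n L)
  (Y D : 'I_n -> R) (Z : 'I_n -> 'I_L -> R) (B : {set 'I_L}) (beta0 : R) : Prop :=
  (T beta0 B Y D Z <= qT B Y D Z).

Definition Cprime_set (n L U : nat) (T : R -> {set 'I_L} -> data_stat n L)
  (qT : {set 'I_L} -> data_stat n L)
  (S qS : {set 'I_L} -> data_stat n L)
  (Y D : 'I_n -> R) (Z : 'I_n -> 'I_L -> R) (beta0 : R) : Prop :=
  exists B : {set 'I_L},
    #|B| = (U - 1)%N /\ (S B Y D Z <= qS B Y D Z) /\ C_set T qT Y D Z B beta0.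

(* One pretest set suffices: complete the support B* of pi* to some B0 with
   c(B0) = U - 1. Then c(B0^C) = L - U + 1 >= 2 and B* is a subset of B0, so both
   the pretest S(B0) and the test T(beta*, B0) are valid, and B0 enters the union
   defining C' unless one of them rejects. A union bound gives the level
   1 - alpha1 - alpha2. *)

From Stdlib Require Import Reals Lra Lia.
From Stdlib Require Import Classical FunctionalExtensionality PropExtensionality.
From mathcomp Require Import all_boot zify.
Open Scope R_scope.

Section ProbabilitySpace.
Context {Omega : Type} {P : prob_space Omega}.

Lemma pred_ext {A B : Omega -> Prop} : (forall w, A w <-> B w) -> A = B.
Proof.
by move=> AB; apply: functional_extensionality => w; apply: propositional_extensionality.
Qed.

Lemma measurable_ext {A B : Omega -> Prop} :
  measurable P A -> (forall w, A w <-> B w) -> measurable P B.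
Proof. by move=> mA /pred_ext <-. Qed.

Lemma measurable0 : measurable P (fun _ => False).
Proof. by apply: measurable_ext (meas_compl (meas_full P)) _ => w; tauto. Qed.

Definition seq2 (A B : Omega -> Prop) (k : nat) : Omega -> Prop :=
  match k with 0%nat => A | 1%nat => B | _ => fun _ => False end.

Lemma bigcup_seq2 (A B : Omega -> Prop) w :
  (exists k, seq2 A B k w) <-> A w \/ B w.
Proof.
split; first by case=> [[|[|k]]] /=; tauto.
by case=> ?; [exists 0%nat | exists 1%nat].
Qed.

Lemma measurable_seq2 {A B : Omega -> Prop} :
  measurable P A -> measurable P B -> forall k, measurable P (seq2 A B k).
Proof. by move=> mA mB [|[|k]] //=; apply: measurable0. Qed.

Lemma measurableU {A B : Omega -> Prop} :
  measurable P A -> measurable P B -> measurable P (fun w => A w \/ B w).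
Proof.
move=> mA mB; apply: measurable_ext (meas_cunion (measurable_seq2 mA mB)) _.
exact: bigcup_seq2.
Qed.

Lemma measurableI {A B : Omega -> Prop} :
  measurable P A -> measurable P B -> measurable P (fun w => A w /\ B w).
Proof.
move=> mA mB.
apply: measurable_ext (meas_compl (measurableU (meas_compl mA) (meas_compl mB))) _.
by move=> w; split; [move=> ?; split; apply: NNPP; tauto | tauto].
Qed.

Lemma measurable_fin_exists (I : finType) (Q : I -> Omega -> Prop) :
  (forall i, measurable P (Q i)) -> measurable P (fun w => exists i, Q i w).
Proof.
move=> mQ.
pose A k := if nth None (map Some (enum I)) k is Some i then Q i else fun _ => False.
have mA k : measurable P (A k).
  by rewrite /A; case: nth => [i|]; [apply: mQ | apply: measurable0].
apply: measurable_ext (meas_cunion mA) _ => w; split.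
  by case=> k; rewrite /A; case: nth => [i Qi|//]; exists i.
case=> i Qi; exists (index i (enum I)); rewrite /A.
have i_enum : (index i (enum I) < size (enum I))%N by rewrite index_mem mem_enum.
by rewrite (nth_map i) // nth_index // mem_enum.
Qed.

(* The constant sequence pr(empty) sums to pr(empty) only if pr(empty) = 0. *)
Lemma pr0 : pr P (fun _ => False) = 0.
Proof.
have sum0 := pr_sigma_add (fun _ => measurable0) (fun _ _ _ _ (f : False) _ => f).
have no_witness : (fun w : Omega => exists _ : nat, False) = (fun _ => False).
  by apply: pred_ext => w; split => [[]|].
rewrite no_witness in sum0.
have [pos|/esym //] := Rle_lt_or_eq_dec _ _ (pr_nonneg measurable0).
have [N HN] := sum0 _ pos.
have N_ge0 := pos_INR N.
have := HN N.+1 ltac:(lia); rewrite sum_cte /Rdist !S_INR Rabs_right; nra.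
Qed.

Lemma prU_disjoint {A B : Omega -> Prop} :
  measurable P A -> measurable P B -> (forall w, A w -> B w -> False) ->
  pr P (fun w => A w \/ B w) = pr P A + pr P B.
Proof.
move=> mA mB AB.
have disj : forall i j w, i <> j -> seq2 A B i w -> seq2 A B j w -> False.
  by move=> [|[|i]] [|[|j]] w ij //= a b; [apply: AB a b | apply: AB b a].
have sumAB := pr_sigma_add (measurable_seq2 mA mB) disj.
rewrite (pred_ext (bigcup_seq2 A B)) in sumAB.
apply: uniqueness_sum sumAB _ => e e_pos; exists 1%nat => [[|m]] m_ge1; first lia.
have -> : sum_f_R0 (fun k => pr P (seq2 A B k)) m.+1 = pr P A + pr P B.
  by elim: m {m_ge1} => [|m IH] /=; [lra | rewrite /= in IH; rewrite IH pr0; lra].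
by rewrite /Rdist Rminus_diag Rabs_R0.
Qed.

Lemma pr_setD_split {A B : Omega -> Prop} :
  measurable P A -> measurable P B ->
  pr P (fun w => A w \/ B w) = pr P A + pr P (fun w => B w /\ ~ A w).
Proof.
move=> mA mB; rewrite -prU_disjoint //; last by move=> w ? [].
  by congr (pr P); apply: pred_ext => w; have := classic (A w); tauto.
exact: measurableI mB (meas_compl mA).
Qed.

Lemma le_pr {A B : Omega -> Prop} :
  measurable P A -> measurable P B -> (forall w, A w -> B w) -> pr P A <= pr P B.
Proof.
move=> mA mB AB.
have BE : (fun w => A w \/ B w) = B by apply: pred_ext => w; split; [case=> [/AB|] | right].
rewrite -BE pr_setD_split //.
have := pr_nonneg (measurableI mB (meas_compl mA)); lra.
Qed.

Lemma prC {A : Omega -> Prop} : measurable P A -> pr P (fun w => ~ A w) = 1 - pr P A.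
Proof.
move=> mA; rewrite -(pr_full P).
have em : (fun _ => True) = (fun w => A w \/ ~ A w).
  by apply: pred_ext => w; have := classic (A w); tauto.
rewrite em prU_disjoint //; [lra | exact: meas_compl].
Qed.

Lemma le_prU {A B : Omega -> Prop} :
  measurable P A -> measurable P B -> pr P (fun w => A w \/ B w) <= pr P A + pr P B.
Proof.
move=> mA mB; rewrite pr_setD_split //.
have := le_pr (measurableI mB (meas_compl mA)) mB (fun w => @proj1 _ _); lra.
Qed.

Lemma pr_ge_bonferroni {A B C : Omega -> Prop} :
  measurable P A -> measurable P B -> measurable P C ->
  (forall w, ~ A w -> ~ B w -> C w) -> pr P C >= 1 - (pr P A + pr P B).
Proof.
move=> mA mB mC ABC.
have mAB := measurableU mA mB.
have neither_C w : ~ (A w \/ B w) -> C w by move=> nAB; apply: ABC => ?; apply: nAB; tauto.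
have := le_pr (meas_compl mAB) mC neither_C.
rewrite prC //; have := le_prU mA mB; lra.
Qed.

End ProbabilitySpace.

Lemma exists_superset_card (T : finType) (k : nat) (A : {set T}) :
  (#|A| <= k <= #|T|)%N -> exists2 B : {set T}, A \subset B & #|B| = k.
Proof.
move=> /andP[]; move Em: (k - #|A|)%N => m; elim: m A Em => [|m IH] A Em Ak kT.
  by exists A => //; lia.
have [x xA] : exists x, x \notin A.
  apply/existsP; rewrite -negb_forall; apply/negP => /forallP Afull.
  have AT : A = setT by apply/setP => y; rewrite inE; apply/idP/Afull.
  by move: Em; rewrite AT cardsT; lia.
have [|||B xAB Bk] := IH (x |: A); rewrite ?cardsU1 ?xA //=; try lia.
by exists B => //; apply: subset_trans xAB; apply: subsetUr.
Qed.

Lemma measurable_Cprime_set {Omega : Type} {P : prob_space Omega} {n L : nat} (U : nat)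
  {Y D : Omega -> 'I_n -> R} {Z : Omega -> 'I_n -> 'I_L -> R}
  {T : R -> {set 'I_L} -> data_stat n L} {qT S qS : {set 'I_L} -> data_stat n L}
  {beta0 : R} :
  (forall B, measurable P (fun w => T beta0 B (Y w) (D w) (Z w) > qT B (Y w) (D w) (Z w))) ->
  (forall B, measurable P (fun w => S B (Y w) (D w) (Z w) > qS B (Y w) (D w) (Z w))) ->
  measurable P (fun w => Cprime_set U T qT S qS (Y w) (D w) (Z w) beta0).
Proof.
move=> mT mS; apply: measurable_fin_exists => B.
have [cardB|cardB] := eqVneq #|B| (U - 1)%N.
  apply: measurable_ext (measurableI (meas_compl (mS B)) (meas_compl (mT B))) _ => w.
  by rewrite /C_set; split=> [[/Rnot_lt_le ? /Rnot_lt_le ?] | [_ [/Rle_not_lt ? /Rle_not_lt ?]]].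
apply: measurable_ext measurable0 _ => w.
by split=> // [[cardB']]; rewrite cardB' eqxx in cardB.
Qed.

Theorem theorem2
  (Omega : Type) (P : prob_space Omega)
  (n L U : nat)
  (Y D : Omega -> 'I_n -> R) (Z : Omega -> 'I_n -> 'I_L -> R)
  (eps : Omega -> 'I_n -> R)
  (pi_star : 'I_L -> R) (beta_star : R)
  (* the linear model Y_i = Z_i^T pi* + D_i beta* + eps_i *)
  (Hmodel : forall w i, Y w i = (\big[Rplus/0]_(j < L) (Z w i j * pi_star j)
                                 + D w i * beta_star + eps w i))
  (HU : (1 <= U <= L - 1)%N)
  (HBstar : (#|supp pi_star| < U)%N)
  (alpha1 alpha2 : R)
  (Ha1 : (0 < alpha1 < 1)) (Ha2 : (0 < alpha2 < 1))
  (Ha : (alpha1 + alpha2 < 1))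
  (T : R -> {set 'I_L} -> data_stat n L) (qT : {set 'I_L} -> data_stat n L)
  (Sstat qS : {set 'I_L} -> data_stat n L)
  (* the statistics are random variables (the relevant events are measurable) *)
  (HTmeas : forall beta0 B, measurable P (fun w =>
      (T beta0 B (Y w) (D w) (Z w) > qT B (Y w) (D w) (Z w))))
  (HSmeas : forall B, measurable P (fun w =>
      (Sstat B (Y w) (D w) (Z w) > qS B (Y w) (D w) (Z w))))
  (* validity of the test T: if B* ⊆ B and beta* = beta0, level alpha2 *)
  (HT : forall (beta0 : R) (B : {set 'I_L}), supp pi_star \subset B -> beta_star = beta0 ->
      (pr P (fun w => (T beta0 B (Y w) (D w) (Z w) > qT B (Y w) (D w) (Z w)))
         <= alpha2))
  (* validity of the pretest S for c(B^C) >= 2: if B* ⊆ B, level alpha1 *)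
  (HS : forall B : {set 'I_L}, (2 <= #|~: B|)%N -> supp pi_star \subset B ->
      (pr P (fun w => (Sstat B (Y w) (D w) (Z w) > qS B (Y w) (D w) (Z w)))
         <= alpha1)) :
  (pr P (fun w => Cprime_set U T qT Sstat qS (Y w) (D w) (Z w) beta_star)
     >= 1 - (alpha1 + alpha2)).
Proof.
have [B0 suppB0 cardB0] : exists2 B0 : {set 'I_L}, supp pi_star \subset B0 & #|B0| = (U - 1)%N.
  by apply: exists_superset_card; rewrite card_ord; lia.
have cardCB0 : (2 <= #|~: B0|)%N by rewrite cardsCs setCK card_ord cardB0; lia.
have accept_B0 w :
    ~ Sstat B0 (Y w) (D w) (Z w) > qS B0 (Y w) (D w) (Z w) ->
    ~ T beta_star B0 (Y w) (D w) (Z w) > qT B0 (Y w) (D w) (Z w) ->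
    Cprime_set U T qT Sstat qS (Y w) (D w) (Z w) beta_star.
  by move=> /Rnot_lt_le S_acc /Rnot_lt_le T_acc; exists B0.
have := pr_ge_bonferroni (HSmeas B0) (HTmeas beta_star B0)
  (measurable_Cprime_set U (HTmeas beta_star) HSmeas) accept_B0.
have := HS B0 cardCB0 suppB0; have := HT beta_star B0 suppB0 erefl; lra.
Qed.
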